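(* Let $m,n\in\mathbb{R}$ with $m\neq 0$, and let $(G_1,g,J)$ be the three-dimensional Lorentzian Lie group described in the context. Then $(G_1,g,J)$ admits no nonzero left-invariant Ricci collineation associated to the Yano connection $\nabla^{*}$: if $\xi=\lambda_1\overline{e}_1+\lambda_2\overline{e}_2+\lambda_3\overline{e}_3$ ($\lambda_i\in\mathbb{R}$ constants) satisfies $\mathrm{L}_{\xi}\overline{\mathrm{Ric}^{*}}=0$, then $\lambda_1=\lambda_2=\lambda_3=0$.
   Context: $G_1$ is a connected three-dimensional Lie group whose Lie algebra has a basis $\{\overline{e}_1,\overline{e}_2,\overline{e}_3\}$ (viewed as left-invariant vector fields) with $[\overline{e}_1,\overline{e}_2]=m\overline{e}_1-n\overline{e}_3$, $[\overline{e}_1,\overline{e}_3]=-m\overline{e}_1-n\overline{e}_2$, $[\overline{e}_2,\overline{e}_3]=n\overline{e}_1+m\overline{e}_2+m\overline{e}_3$. The metric $g$ is the left-invariant Lorentzian metric for which $\{\overline{e}_1,\overline{e}_2,\overline{e}_3\}$ is pseudo-orthonormal with $\overline{e}_3$ timelike: $g(\overline{e}_1,\overline{e}_1)=g(\overline{e}_2,\overline{e}_2)=1$, $g(\overline{e}_3,\overline{e}_3)=-1$, $g(\overline{e}_i,\overline{e}_j)=0$ for $i\neq j$. $J$ is the left-invariant product structure with $J\overline{e}_1=\overline{e}_1$, $J\overline{e}_2=\overline{e}_2$, $J\overline{e}_3=-\overline{e}_3$. With $\nabla^{LC}$ the Levi-Civita connection of $g$, the Yano connection is $\nabla^{*}_XY=\nabla^{LC}_XY-\frac12(\nabla^{LC}_YJ)JX-\frac14[(\nabla^{LC}_XJ)JY-(\nabla^{LC}_{JX}J)Y]$.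 Its curvature is $R^{*}(X,Y)Z=\nabla^{*}_X\nabla^{*}_YZ-\nabla^{*}_Y\nabla^{*}_XZ-\nabla^{*}_{[X,Y]}Z$, its Ricci tensor is $\mathrm{Ric}^{*}(X,Y)=-g(R^{*}(X,\overline{e}_1)Y,\overline{e}_1)-g(R^{*}(X,\overline{e}_2)Y,\overline{e}_2)+g(R^{*}(X,\overline{e}_3)Y,\overline{e}_3)$, and $\overline{\mathrm{Ric}^{*}}(X,Y)=\frac12(\mathrm{Ric}^{*}(X,Y)+\mathrm{Ric}^{*}(Y,X))$. For a left-invariant vector field $\xi$, $(\mathrm{L}_{\xi}\overline{\mathrm{Ric}^{*}})(X,Y)=\xi(\overline{\mathrm{Ric}^{*}}(X,Y))-\overline{\mathrm{Ric}^{*}}([\xi,X],Y)-\overline{\mathrm{Ric}^{*}}(X,[\xi,Y])$; $\xi$ is a left-invariant Ricci collineation (associated to $\nabla^{*}$) if $\mathrm{L}_{\xi}\overline{\mathrm{Ric}^{*}}=0$. *)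

From Stdlib Require Import Reals.
Open Scope R_scope.

(* The Lie algebra of G_1, identified with the space of left-invariant
   vector fields: X = c1 X * e1 + c2 X * e2 + c3 X * e3. *)
Record vec := mkV { c1 : R; c2 : R; c3 : R }.

Definition e1 : vec := mkV 1 0 0.
Definition e2 : vec := mkV 0 1 0.
Definition e3 : vec := mkV 0 0 1.

Definition vadd (X Y : vec) : vec := mkV (c1 X + c1 Y) (c2 X + c2 Y) (c3 X + c3 Y).
Definition vsub (X Y : vec) : vec := mkV (c1 X - c1 Y) (c2 X - c2 Y) (c3 X - c3 Y).
Definition vscal (a : R) (X : vec) : vec := mkV (a * c1 X) (a * c2 X) (a * c3 X).

Definition g (X Y : vec) : R := c1 X * c1 Y + c2 X * c2 Y - c3 X * c3 Y.

(* Lie bracket, bilinear extension of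
   [e1,e2] = m e1 - n e3, [e1,e3] = -m e1 - n e2, [e2,e3] = n e1 + m e2 + m e3. *)
Definition br (m n : R) (X Y : vec) : vec :=
  let a12 := c1 X * c2 Y - c2 X * c1 Y in
  let a13 := c1 X * c3 Y - c3 X * c1 Y in
  let a23 := c2 X * c3 Y - c3 X * c2 Y in
  vadd (vadd (vscal a12 (vsub (vscal m e1) (vscal n e3)))
             (vscal a13 (vsub (vscal (-m) e1) (vscal n e2))))
       (vscal a23 (vadd (vadd (vscal n e1) (vscal m e2)) (vscal m e3))).

(* Koszul formula for left-invariant fields:
   g(nabla_X Y, Z) = 1/2 (g([X,Y],Z) - g([Y,Z],X) + g([Z,X],Y)). *)
Definition koszul (m n : R) (X Y Z : vec) : R :=
  / 2 * (g (br m n X Y) Z - g (br m n Y Z) X + g (br m n Z X) Y).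

(* Levi-Civita connection: raise the index with the pseudo-orthonormal frame. *)
Definition nablaLC (m n : R) (X Y : vec) : vec :=
  mkV (koszul m n X Y e1) (koszul m n X Y e2) (- koszul m n X Y e3).

Definition J (X : vec) : vec := mkV (c1 X) (c2 X) (- c3 X).

Definition nablaJ (m n : R) (X Y : vec) : vec :=
  vsub (nablaLC m n X (J Y)) (J (nablaLC m n X Y)).

Definition nablaY (m n : R) (X Y : vec) : vec :=
  vsub (vsub (nablaLC m n X Y) (vscal (/ 2) (nablaJ m n Y (J X))))
       (vscal (/ 4) (vsub (nablaJ m n X (J Y)) (nablaJ m n (J X) Y))).

Definition curvY (m n : R) (X Y Z : vec) : vec :=
  vsub (vsub (nablaY m n X (nablaY m n Y Z)) (nablaY m n Y (nablaY m n X Z)))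
       (nablaY m n (br m n X Y) Z).

Definition RicY (m n : R) (X Y : vec) : R :=
  - g (curvY m n X e1 Y) e1 - g (curvY m n X e2 Y) e2 + g (curvY m n X e3 Y) e3.

Definition symRicY (m n : R) (X Y : vec) : R :=
  / 2 * (RicY m n X Y + RicY m n Y X).

(* Lie derivative of symRicY along a left-invariant xi, evaluated on
   left-invariant X, Y.  The term xi(symRicY(X,Y)) vanishes because
   symRicY(X,Y) is a constant function for left-invariant X, Y. *)
Definition LieSymRicY (m n : R) (xi X Y : vec) : R :=
  0 - symRicY m n (br m n xi X) Y - symRicY m n X (br m n xi Y).

(* xi is a left-invariant Ricci collineation (associated to the Yano connection):
   the tensor L_xi symRicY vanishes; being a tensor, it suffices (and is
   necessary) that it vanishes on all left-invariant fields. *)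
Definition ricci_collineation (m n : R) (xi : vec) : Prop :=
  forall X Y : vec, LieSymRicY m n xi X Y = 0.

(* The Yano connection of (G_1, g, J) has constant coefficients in the frame
   (e1, e2, e3), so its symmetrised Ricci tensor is a constant symmetric
   matrix S, and L_xi S = -(ad_xi^T S + S ad_xi) is linear in xi.  Already the
   (e1,e1), (e2,e2) and (e1,e3) entries force xi = 0: eliminating l3 and l1
   leaves (2 m^4 + m^2 n^2 + 2 n^4) l2 = 0, and this coefficient is positive
   for m <> 0. *)
From Stdlib Require Import Reals Lra Psatz.
Open Scope R_scope.

Lemma br_coord m n X Y : br m n X Y =
  mkV (m * (c1 X * c2 Y - c2 X * c1 Y) - m * (c1 X * c3 Y - c3 X * c1 Y)
         + n * (c2 X * c3 Y - c3 X * c2 Y))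
      (- n * (c1 X * c3 Y - c3 X * c1 Y) + m * (c2 X * c3 Y - c3 X * c2 Y))
      (- n * (c1 X * c2 Y - c2 X * c1 Y) + m * (c2 X * c3 Y - c3 X * c2 Y)).
Proof.
  unfold br, vadd, vsub, vscal, e1, e2, e3; cbn [c1 c2 c3]; f_equal; ring.
Qed.

Lemma nablaLC_coord m n X Y : nablaLC m n X Y =
  mkV (m * c1 X * (c2 Y - c3 Y) + n / 2 * (c2 X * c3 Y - c3 X * c2 Y))
      (m * (c2 X * c3 Y - c1 X * c1 Y - c3 X * c3 Y) + n / 2 * (c3 X * c1 Y - c1 X * c3 Y))
      (m * (c2 X * c2 Y - c1 X * c1 Y - c3 X * c2 Y) + n / 2 * (c2 X * c1 Y - c1 X * c2 Y)).
Proof.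
  unfold nablaLC, koszul, g; rewrite !br_coord; unfold e1, e2, e3; cbn [c1 c2 c3].
  f_equal; field.
Qed.

Lemma nablaJ_coord m n X Y : nablaJ m n X Y =
  mkV ((2 * m * c1 X - n * c2 X) * c3 Y)
      ((n * c1 X - 2 * m * c2 X + 2 * m * c3 X) * c3 Y)
      (2 * m * (c2 X * c2 Y - c1 X * c1 Y - c3 X * c2 Y) + n * (c2 X * c1 Y - c1 X * c2 Y)).
Proof.
  unfold nablaJ, vsub, J; rewrite !nablaLC_coord; cbn [c1 c2 c3]; f_equal; field.
Qed.

Lemma nablaY_coord m n X Y : nablaY m n X Y =
  mkV (m * c1 X * c2 Y - n * c3 X * c2 Y + m * c3 X * c1 Y)
      (- m * c1 X * c1 Y + n * c3 X * c1 Y - m * c3 X * c2 Y)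
      (n * (c2 X * c1 Y - c1 X * c2 Y) + m * c2 X * c3 Y).
Proof.
  unfold nablaY, vsub, vscal, J; rewrite !nablaJ_coord, !nablaLC_coord; cbn [c1 c2 c3].
  f_equal; field.
Qed.

Lemma RicY_coord m n X Y : RicY m n X Y =
  - (m ^ 2 + n ^ 2) * (c1 X * c1 Y + c2 X * c2 Y)
  + m * n * (c1 X * c2 Y + c2 X * c1 Y) - m * n * c1 X * c3 Y + m ^ 2 * c2 X * c3 Y.
Proof.
  unfold RicY, curvY, g, vsub; rewrite !br_coord; cbn [c1 c2 c3].
  rewrite !nablaY_coord; unfold e1, e2, e3; cbn [c1 c2 c3]; ring.
Qed.

Lemma symRicY_coord m n X Y : symRicY m n X Y =
  - (m ^ 2 + n ^ 2) * (c1 X * c1 Y + c2 X * c2 Y)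
  + m * n * (c1 X * c2 Y + c2 X * c1 Y)
  - m * n / 2 * (c1 X * c3 Y + c3 X * c1 Y)
  + m ^ 2 / 2 * (c2 X * c3 Y + c3 X * c2 Y).
Proof. unfold symRicY; rewrite !RicY_coord; field. Qed.

Section LieDerivativeOnFrame.

Variables m n l1 l2 l3 : R.

Let xi := mkV l1 l2 l3.

Lemma LieSymRicY_e1e1 :
  LieSymRicY m n xi e1 e1 = m * (2 * m ^ 2 * l3 - (2 * m ^ 2 + n ^ 2) * l2).
Proof.
  unfold LieSymRicY; rewrite !symRicY_coord, !br_coord; unfold xi, e1; cbn [c1 c2 c3].
  field.
Qed.

Lemma LieSymRicY_e2e2 : LieSymRicY m n xi e2 e2 = - m ^ 2 * (n * l1 + m * l3).
Proof.
  unfold LieSymRicY; rewrite !symRicY_coord, !br_coord; unfold xi, e2; cbn [c1 c2 c3].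
  field.
Qed.

Lemma LieSymRicY_e1e3 : LieSymRicY m n xi e1 e3 = n ^ 3 * l2 - m ^ 3 * l1.
Proof.
  unfold LieSymRicY; rewrite !symRicY_coord, !br_coord; unfold xi, e1, e3; cbn [c1 c2 c3].
  field.
Qed.

End LieDerivativeOnFrame.

Lemma quartic_form_pos (m n : R) : m <> 0 -> 0 < 2 * m ^ 4 + m ^ 2 * n ^ 2 + 2 * n ^ 4.
Proof.
  intro hm.
  assert (0 < m ^ 2) by (rewrite <- Rsqr_pow2; apply Rsqr_pos_lt; exact hm).
  nra.
Qed.

Lemma collineation_system_trivial (m n l1 l2 l3 : R) : m <> 0 ->
  2 * m ^ 2 * l3 = (2 * m ^ 2 + n ^ 2) * l2 ->
  n * l1 + m * l3 = 0 ->
  n ^ 3 * l2 = m ^ 3 * l1 ->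
  l1 = 0 /\ l2 = 0 /\ l3 = 0.
Proof.
  intros hm e11 e22 e13.
  assert (hm3 : m ^ 3 <> 0) by (apply pow_nonzero; exact hm).
  (* 2 m^3 e22 - m^2 e11 - 2 n e13 eliminates l3 and l1. *)
  assert (hl2 : (2 * m ^ 4 + m ^ 2 * n ^ 2 + 2 * n ^ 4) * l2 = 0).
  { replace ((2 * m ^ 4 + m ^ 2 * n ^ 2 + 2 * n ^ 4) * l2)
      with (2 * m ^ 3 * (n * l1 + m * l3) - m ^ 2 * (2 * m ^ 2 * l3 - (2 * m ^ 2 + n ^ 2) * l2)
            - 2 * n * (m ^ 3 * l1 - n ^ 3 * l2))
      by ring.
    rewrite e11, e22, e13; ring. }
  assert (l2_0 : l2 = 0).
  { destruct (Rmult_integral _ _ hl2) as [h | h]; [|exact h].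
    pose proof (quartic_form_pos m n hm); lra. }
  subst l2.
  assert (l1_0 : l1 = 0).
  { apply (Rmult_eq_reg_l (m ^ 3)); [lra | exact hm3]. }
  subst l1.
  assert (l3_0 : l3 = 0).
  { apply (Rmult_eq_reg_l m); [lra | exact hm]. }
  auto.
Qed.

Theorem theorem3p3 (m n : R) (hm : m <> 0) (l1 l2 l3 : R) :
  ricci_collineation m n (mkV l1 l2 l3) -> l1 = 0 /\ l2 = 0 /\ l3 = 0.
Proof.
  intro hxi.
  pose proof (hxi e1 e1) as e11; rewrite LieSymRicY_e1e1 in e11.
  pose proof (hxi e2 e2) as e22; rewrite LieSymRicY_e2e2 in e22.
  pose proof (hxi e1 e3) as e13; rewrite LieSymRicY_e1e3 in e13.
  assert (hm2 : m ^ 2 <> 0) by (apply pow_nonzero; exact hm).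
  apply (collineation_system_trivial m n); trivial.
  - destruct (Rmult_integral _ _ e11); [contradiction | lra].
  - destruct (Rmult_integral _ _ e22) as [h | h]; [|exact h].
    exfalso; apply hm2; lra.
  - lra.
Qed.
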